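(* Let $P$ be a convex polygon with no two edges parallel. For any LMAP $Q$ in $P$, at least one of the following holds: (a) $Q$ has an anchored narrow corner; (b) $Q$ has an anchored broad corner that has at least one adjacent corner anchored; (c) all four corners of $Q$ are even.
   Context: $P$ is a compact convex polygon with boundary $\partial P$, edges $e_1,\ldots,e_n$ clockwise and vertices $v_1,\ldots,v_n$, $e_i$ the open segment from $v_i$ to $v_{i+1}$ (indices mod $n$). $\ell_i$ is the line containing $e_i$, $\mathsf{I}_{i,j}=\ell_i\cap\ell_j$. For distinct edges, $e_i\prec e_j$ means $\mathsf{I}_{i,j}=v_i+t(v_{i+1}-v_i)$ for some $t\ge1$ (equivalently the clockwise turning angle from direction $v_{i+1}-v_i$ to $v_{j+1}-v_j$ is in $(0,\pi)$). A unit is an edge or a vertex of $P$; for $X\in\partial P$, $\mathbf{u}(X)$ is the unique unit containing $X$. For a vertex $v_i$, $back(v_i)=e_{i-1}$, $forw(v_i)=e_i$; for an edge $e$, $back(e)=forw(e)=e$. A unit $u$ is chasing a unit $u'$ if $back(u)\prec back(u')$ and $forw(u)\prec forw(u')$. For a parallelogram $A_0A_1A_2A_3$ inscribed in $P$ (corners on $\partial P$, in clockwise order, subscripts mod 4), corner $A_i$ is narrow if $\mathbf{u}(A_{i-1})$ is chasing $\mathbf{u}(A_{i+1})$; broad if $\mathbf{u}(A_{i+1})$ is chasing $\mathbf{u}(A_{i-1})$; even if neither of $\mathbf{u}(A_{i+1}),\mathbf{u}(A_{i-1})$ is chasing the other. A corner is anchored if it coincides with a vertex of $P$. A parallelogram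 lies in $P$ if its corners lie in $P$; $A_0A_1A_2A_3$ lying in $P$ is locally maximal if there is $\delta>0$ such that every parallelogram $B_0B_1B_2B_3$ lying in $P$ with $|A_iB_i|<\delta$ for all $i$ has area at most that of $A_0A_1A_2A_3$; it is slidable if two corners lie in the same open edge. An LMAP is a locally maximal non-slidable parallelogram lying in $P$ (every LMAP is inscribed). *)

From Stdlib Require Import Reals Lra Lia Arith.
Open Scope R_scope.

Definition pt : Type := (R * R)%type.
Definition padd (p q : pt) : pt := (fst p + fst q, snd p + snd q).
Definition psub (p q : pt) : pt := (fst p - fst q, snd p - snd q).
Definition pscale (t : R) (p : pt) : pt := (t * fst p, t * snd p).
(* z-component of the cross product; < 0 means a clockwise turn *)
Definition cross (p q : pt) : R := fst p * snd q - snd p * fst q.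
Definition dist (p q : pt) : R := sqrt ((fst p - fst q) ^ 2 + (snd p - snd q) ^ 2).

(* Polygon with n vertices v 0, ..., v (n-1) (paper: v_1..v_n), indices mod n. *)
Definition vtx (n : nat) (v : nat -> pt) (i : nat) : pt := v (Nat.modulo i n).
Definition edir (n : nat) (v : nat -> pt) (i : nat) : pt :=
  psub (vtx n v (S i)) (vtx n v i).

(* Convex polygon, vertices in clockwise order, genuine vertices:
   every other vertex lies strictly to the right of each directed edge. *)
Definition convex_polygon_cw (n : nat) (v : nat -> pt) : Prop :=
  (3 <= n)%nat /\
  forall i j, (i < n)%nat -> (j < n)%nat -> j <> i -> j <> Nat.modulo (S i) n ->
    cross (edir n v i) (psub (vtx n v j) (vtx n v i)) < 0.

Definition no_parallel_edges (n : nat) (v : nat -> pt) : Prop :=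
  forall i j, (i < n)%nat -> (j < n)%nat -> i <> j ->
    cross (edir n v i) (edir n v j) <> 0.

Definition in_P (n : nat) (v : nat -> pt) (X : pt) : Prop :=
  forall i, (i < n)%nat -> cross (edir n v i) (psub X (vtx n v i)) <= 0.

Definition on_line (n : nat) (v : nat -> pt) (j : nat) (X : pt) : Prop :=
  cross (edir n v j) (psub X (vtx n v j)) = 0.

Definition prec (n : nat) (v : nat -> pt) (i j : nat) : Prop :=
  i <> j /\ exists t, 1 <= t /\ on_line n v j (padd (vtx n v i) (pscale t (edir n v i))).

Definition in_open_edge (n : nat) (v : nat -> pt) (i : nat) (X : pt) : Prop :=
  exists t, 0 < t < 1 /\ X = padd (vtx n v i) (pscale t (edir n v i)).

Inductive punit : Type := UEdge (i : nat) | UVert (i : nat).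

Definition in_unit (n : nat) (v : nat -> pt) (X : pt) (u : punit) : Prop :=
  match u with
  | UEdge i => (i < n)%nat /\ in_open_edge n v i X
  | UVert i => (i < n)%nat /\ X = vtx n v i
  end.

Definition back (n : nat) (u : punit) : nat :=
  match u with
  | UEdge i => i
  | UVert i => Nat.modulo (i + n - 1) n
  end.

Definition forw (u : punit) : nat :=
  match u with
  | UEdge i => i
  | UVert i => i
  end.

Definition chasing (n : nat) (v : nat -> pt) (u u' : punit) : Prop :=
  prec n v (back n u) (back n u') /\ prec n v (forw u) (forw u').

Definition corner (A : nat -> pt) (k : nat) : pt := A (Nat.modulo k 4).

(* parallelogram with corners in clockwise order (non-degenerate) *)
Definition is_parallelogram (A : nat -> pt) : Prop :=
  padd (A 0%nat) (A 2%nat) = padd (A 1%nat) (A 3%nat) /\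
  cross (psub (A 1%nat) (A 0%nat)) (psub (A 3%nat) (A 0%nat)) < 0.

Definition area (A : nat -> pt) : R :=
  Rabs (cross (psub (A 1%nat) (A 0%nat)) (psub (A 3%nat) (A 0%nat))).

Definition lies_in (n : nat) (v : nat -> pt) (A : nat -> pt) : Prop :=
  forall k, (k < 4)%nat -> in_P n v (A k).

Definition locally_maximal (n : nat) (v : nat -> pt) (A : nat -> pt) : Prop :=
  exists delta, 0 < delta /\
    forall B : nat -> pt, is_parallelogram B -> lies_in n v B ->
      (forall k, (k < 4)%nat -> dist (A k) (B k) < delta) ->
      area B <= area A.

Definition slidable (n : nat) (v : nat -> pt) (A : nat -> pt) : Prop :=
  exists k l i, (k < 4)%nat /\ (l < 4)%nat /\ k <> l /\ (i < n)%nat /\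
    in_open_edge n v i (A k) /\ in_open_edge n v i (A l).

Definition LMAP (n : nat) (v : nat -> pt) (A : nat -> pt) : Prop :=
  is_parallelogram A /\ lies_in n v A /\ locally_maximal n v A /\ ~ slidable n v A.

Definition anchored (n : nat) (v : nat -> pt) (X : pt) : Prop :=
  exists i, (i < n)%nat /\ X = vtx n v i.

(* corner A_k: neighbours A_{k-1} = corner (k+3), A_{k+1} = corner (k+1) *)
Definition narrow (n : nat) (v : nat -> pt) (A : nat -> pt) (k : nat) : Prop :=
  exists u u', in_unit n v (corner A (k + 3)) u /\ in_unit n v (corner A (k + 1)) u' /\
    chasing n v u u'.

Definition broad (n : nat) (v : nat -> pt) (A : nat -> pt) (k : nat) : Prop :=
  exists u u', in_unit n v (corner A (k + 3)) u /\ in_unit n v (corner A (k + 1)) u' /\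
    chasing n v u' u.

Definition even (n : nat) (v : nat -> pt) (A : nat -> pt) (k : nat) : Prop :=
  exists u u', in_unit n v (corner A (k + 3)) u /\ in_unit n v (corner A (k + 1)) u' /\
    ~ chasing n v u u' /\ ~ chasing n v u' u.

(* A corner of a locally maximal parallelogram Q lies on the boundary of P: otherwise a side
   through it can be pushed outwards.  If the corners W1, W2, W3 of Q lie in open edges
   a, b, c with a ≺ b, b ≺ c and a ≺ c (for distinct edges, a ≺ b means cross(a,b) < 0),
   sliding them along their edges with velocities cross(b,c) a, cross(a,c) b, cross(a,b) c
   while W0 stays fixed keeps a parallelogram whose area is a quadratic function of time with
   positive leading coefficient, so Q is not locally maximal.  For two consecutive corners in
   distinct open edges a, b, the relation a ≺ b holds automatically once no two edges are
   parallel.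

   If some corner of Q is not even, then some corner Y is narrow: the unit of its neighbour
   X0 chases that of its other neighbour X1.  Let Z be the fourth corner; we may assume Y lies
   in an open edge d.  If Z is a vertex, either X0 or X1 is a vertex, or both lie in open
   edges p ≺ q and sliding X0, Y, X1 contradicts maximality.  If Z lies in an open edge r and
   d ≺ r, then X1 is a vertex (so X1 is an anchored narrow corner), since otherwise sliding
   Y, X1, Z contradicts maximality; symmetrically if r ≺ d. *)

From Pilot Require Import Defs.
From Stdlib Require Import Reals Lra Lia Arith Classical.
Open Scope R_scope.

Ltac coords := unfold cross, psub, padd, pscale in *; simpl in *.
Ltac pt_ring := apply injective_projections; coords; ring.

Lemma cross_lerp (e a b c : pt) (t : R) :
  cross e (psub (padd a (pscale t (psub b a))) c) =
  (1 - t) * cross e (psub a c) + t * cross e (psub b c).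
Proof. coords. ring. Qed.

Lemma cross_psub_along (e a w : pt) (t : R) :
  cross e (psub w (padd a (pscale t e))) = cross e (psub w a).
Proof. coords. ring. Qed.

Lemma cross_psub_shift (e a d c : pt) (t : R) :
  cross e (psub (padd a (pscale t d)) c) = cross e (psub a c) + t * cross e d.
Proof. coords. ring. Qed.

Lemma cross_antisym (a b : pt) : cross a b = - cross b a.
Proof. coords. ring. Qed.

Lemma cross_zero_scale (e w : pt) :
  cross e w = 0 -> 0 < fst e * fst e + snd e * snd e -> exists t, w = pscale t e.
Proof.
  intros Hc He. exists ((fst e * fst w + snd e * snd w) / (fst e * fst e + snd e * snd e)).
  unfold cross in Hc.
  assert (H1 : fst e * (fst e * snd w - snd e * fst w) = 0) by (rewrite Hc; ring).
  assert (H2 : snd e * (fst e * snd w - snd e * fst w) = 0) by (rewrite Hc; ring).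
  apply injective_projections; simpl; field_simplify_eq; lra.
Qed.

Lemma cross_neg_norm_pos (e f : pt) : cross e f < 0 -> 0 < fst e * fst e + snd e * snd e.
Proof.
  unfold cross. intros H.
  destruct (Req_dec (fst e) 0) as [E|E]; [destruct (Req_dec (snd e) 0) as [E'|E']|].
  - rewrite E, E' in H. lra.
  - pose proof (Rsqr_pos_lt _ E'). unfold Rsqr in *. nra.
  - pose proof (Rsqr_pos_lt _ E). unfold Rsqr in *. nra.
Qed.

Definition near0 (Q : R -> Prop) : Prop :=
  exists h, 0 < h /\ forall s, Rabs s <= h -> Q s.

Lemma Rabs_le_between x y : Rabs x <= y -> - y <= x <= y.
Proof.
  intros H. pose proof (Rle_abs x). pose proof (Rle_abs (- x)). rewrite Rabs_Ropp in *. lra.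
Qed.

Lemma near0_and (P Q : R -> Prop) : near0 P -> near0 Q -> near0 (fun s => P s /\ Q s).
Proof.
  intros [h1 [H1 P1]] [h2 [H2 P2]]. exists (Rmin h1 h2). split; [apply Rmin_pos; auto|].
  intros s Hs. pose proof (Rmin_l h1 h2). pose proof (Rmin_r h1 h2).
  split; [apply P1 | apply P2]; lra.
Qed.

Lemma near0_forall_lt (Q : nat -> R -> Prop) m :
  (forall j, (j < m)%nat -> near0 (Q j)) -> near0 (fun s => forall j, (j < m)%nat -> Q j s).
Proof.
  induction m as [|m IH]; intros H.
  - exists 1. split; [lra|]. intros s _ j Hj. lia.
  - destruct (near0_and _ _ (IH (fun j Hj => H j (Nat.lt_lt_succ_r _ _ Hj))) (H m (Nat.lt_succ_diag_r m)))
      as [h [Hh Hq]].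
    exists h. split; [exact Hh|]. intros s Hs j Hj. destruct (Hq s Hs) as [Hlt Hm].
    destruct (Nat.eq_dec j m) as [->|E]; [exact Hm | apply Hlt; lia].
Qed.

Lemma near0_scale (Q : R -> Prop) k : near0 Q -> near0 (fun s => Q (s * k)).
Proof.
  intros [h [Hh HQ]]. exists (h / (Rabs k + 1)).
  pose proof (Rabs_pos k).
  split; [apply Rdiv_lt_0_compat; lra|]. intros s Hs. apply HQ.
  rewrite Rabs_mult.
  assert (E : h / (Rabs k + 1) * (Rabs k + 1) = h) by (field; lra).
  pose proof (Rabs_pos s). nra.
Qed.

Lemma near0_add_nonpos c : c < 0 -> near0 (fun u => c + u <= 0).
Proof.
  intros Hc. exists (- c). split; [lra|]. intros u Hu. apply Rabs_le_between in Hu. lra.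
Qed.

Lemma dist_translate X m s :
  Defs.dist X (padd X (pscale s m)) = Rabs s * sqrt (fst m * fst m + snd m * snd m).
Proof.
  unfold Defs.dist. rewrite <- sqrt_Rsqr_abs, <- sqrt_mult_alt by apply Rle_0_sqr.
  f_equal. unfold Rsqr. coords. ring.
Qed.

Lemma dist_self X : Defs.dist X X = 0.
Proof.
  unfold Defs.dist. rewrite <- sqrt_0. f_equal. ring.
Qed.

Lemma near0_dist X m delta : 0 < delta -> near0 (fun s => Defs.dist X (padd X (pscale s m)) < delta).
Proof.
  intros Hd. set (E := sqrt (fst m * fst m + snd m * snd m)).
  assert (HE : 0 <= E) by apply sqrt_pos.
  exists (delta / (2 * (E + 1))). split; [apply Rdiv_lt_0_compat; lra|].
  intros s Hs. rewrite dist_translate. fold E.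
  assert (Hm : delta / (2 * (E + 1)) * (2 * (E + 1)) = delta) by (field; lra).
  pose proof (Rabs_pos s). nra.
Qed.

Definition parallelogram4 (W0 W1 W2 W3 : pt) : Prop :=
  padd W0 W2 = padd W1 W3 /\ cross (psub W1 W0) (psub W3 W0) < 0.

Lemma parallelogram_fourth W0 W1 W2 W3 :
  padd W0 W2 = padd W1 W3 -> W2 = padd W1 (psub W3 W0).
Proof.
  intros H. pose proof (f_equal fst H). pose proof (f_equal snd H).
  apply injective_projections; coords; lra.
Qed.

Lemma parallelogram_cross_rot W0 W1 W2 W3 : padd W0 W2 = padd W1 W3 ->
  cross (psub W2 W1) (psub W0 W1) = cross (psub W1 W0) (psub W3 W0).
Proof. intros H. rewrite (parallelogram_fourth _ _ _ _ H). coords. ring. Qed.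

Lemma parallelogram_sum_rot W0 W1 W2 W3 : padd W0 W2 = padd W1 W3 -> padd W1 W3 = padd W2 W0.
Proof. intros H. rewrite (parallelogram_fourth _ _ _ _ H). pt_ring. Qed.

Lemma parallelogram4_rot W0 W1 W2 W3 :
  parallelogram4 W0 W1 W2 W3 -> parallelogram4 W1 W2 W3 W0.
Proof.
  intros [Hs Hc]. split; [apply parallelogram_sum_rot, Hs|].
  rewrite (parallelogram_cross_rot _ _ _ _ Hs). exact Hc.
Qed.

Lemma corner_shift (A : nat -> pt) i j : (i = j \/ i = j + 4)%nat -> corner A i = corner A j.
Proof.
  intros [-> | ->]; [reflexivity|]. unfold corner.
  replace (j + 4)%nat with (j + 1 * 4)%nat by lia. rewrite Nat.Div0.mod_add. reflexivity.
Qed.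

Lemma corner_mod4 (A : nat -> pt) m j : corner A (m mod 4 + j) = corner A (m + j).
Proof. unfold corner. rewrite Nat.Div0.add_mod_idemp_l. reflexivity. Qed.

Lemma mod4_neq i j : (i < j < i + 4 \/ j < i < j + 4)%nat -> i mod 4 <> j mod 4.
Proof. intros H E. pose proof (Nat.div_mod_eq i 4). pose proof (Nat.div_mod_eq j 4). lia. Qed.

Section Polygon.

Variables (n : nat) (v : nat -> pt).
Hypothesis convex : convex_polygon_cw n v.
Hypothesis no_parallel : no_parallel_edges n v.

Lemma n_ge3 : (3 <= n)%nat.
Proof. exact (proj1 convex). Qed.

Lemma succ_mod i : (i < n)%nat ->
  (S i = n /\ S i mod n = 0 \/ S i < n /\ S i mod n = S i)%nat.
Proof.
  intros Hi. destruct (Nat.eq_dec (S i) n) as [E|E].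
  - left. rewrite E. split; [reflexivity | apply Nat.Div0.mod_same].
  - right. split; [lia | apply Nat.mod_small; lia].
Qed.

Lemma mod_lt i : (i mod n < n)%nat.
Proof. apply Nat.mod_upper_bound. pose proof n_ge3. lia. Qed.

Lemma vtx_mod i : vtx n v (i mod n) = vtx n v i.
Proof. unfold vtx. rewrite Nat.Div0.mod_mod. reflexivity. Qed.

Lemma edir_mod i : edir n v (i mod n) = edir n v i.
Proof.
  unfold edir. rewrite vtx_mod. unfold vtx.
  replace (S (i mod n)) with (i mod n + 1)%nat by lia.
  replace (S i) with (i + 1)%nat by lia.
  rewrite Nat.Div0.add_mod_idemp_l. reflexivity.
Qed.

Lemma edir_vtx_succ i : vtx n v (S i) = padd (vtx n v i) (edir n v i).
Proof. unfold edir. pt_ring. Qed.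

Lemma vtx_strict k j : (k < n)%nat -> (j mod n <> k)%nat -> (j mod n <> S k mod n)%nat ->
  cross (edir n v k) (psub (vtx n v j) (vtx n v k)) < 0.
Proof.
  intros Hk Hj Hj'. rewrite <- vtx_mod. apply (proj2 convex); auto using mod_lt.
Qed.

Lemma vtx_half_plane k j : (k < n)%nat ->
  cross (edir n v k) (psub (vtx n v j) (vtx n v k)) <= 0.
Proof.
  intros Hk.
  destruct (Nat.eq_dec (j mod n) k) as [E|E].
  - rewrite <- vtx_mod, E. coords. lra.
  - destruct (Nat.eq_dec (j mod n) (S k mod n)) as [E'|E'].
    + rewrite <- vtx_mod, E', vtx_mod. unfold edir. coords. lra.
    + apply Rlt_le, vtx_strict; auto.
Qed.

Lemma edge_point_in_P i t : 0 <= t <= 1 ->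
  in_P n v (padd (vtx n v i) (pscale t (edir n v i))).
Proof.
  intros Ht k Hk. unfold edir at 2. rewrite cross_lerp.
  pose proof (vtx_half_plane k i Hk). pose proof (vtx_half_plane k (S i) Hk). nra.
Qed.

Lemma in_P_segment a b t : in_P n v a -> in_P n v b -> 0 <= t <= 1 ->
  in_P n v (padd a (pscale t (psub b a))).
Proof.
  intros Ha Hb Ht k Hk. rewrite cross_lerp.
  pose proof (Ha k Hk). pose proof (Hb k Hk). nra.
Qed.

Lemma open_edge_strict i k X : (i < n)%nat -> (k < n)%nat -> k <> i ->
  in_open_edge n v i X -> cross (edir n v k) (psub X (vtx n v k)) < 0.
Proof.
  intros Hi Hk Hki [t [Ht ->]]. unfold edir at 2. rewrite cross_lerp.
  pose proof (vtx_half_plane k i Hk). pose proof (vtx_half_plane k (S i) Hk).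
  destruct (Nat.eq_dec i (S k mod n)) as [E|E].
  - assert (cross (edir n v k) (psub (vtx n v (S i)) (vtx n v k)) < 0); [|nra].
    pose proof n_ge3. pose proof (succ_mod k Hk). pose proof (succ_mod i Hi).
    apply vtx_strict; auto; lia.
  - assert (cross (edir n v k) (psub (vtx n v i) (vtx n v k)) < 0); [|nra].
    apply vtx_strict; rewrite ?(Nat.mod_small i n) by lia; auto.
Qed.

Lemma succ_succ_mod i : (i < n)%nat ->
  (S (S i) mod n <> i /\ S (S i) mod n <> S i mod n)%nat.
Proof.
  intros Hi. pose proof n_ge3.
  destruct (Nat.eq_dec (S i) n) as [E|E].
  - rewrite E, Nat.Div0.mod_same.
    replace (S n) with (1 + 1 * n)%nat by lia. rewrite Nat.Div0.mod_add.
    rewrite Nat.mod_small by lia. lia.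
  - destruct (Nat.eq_dec (S (S i)) n) as [E'|E'].
    + rewrite E', Nat.Div0.mod_same, Nat.mod_small by lia. lia.
    + rewrite !Nat.mod_small by lia. lia.
Qed.

Lemma edir_turn_cw i : (i < n)%nat -> cross (edir n v i) (edir n v (S i)) < 0.
Proof.
  intros Hi. destruct (succ_succ_mod i Hi) as [E E'].
  pose proof (vtx_strict i (S (S i)) Hi E E') as H.
  unfold edir at 2. rewrite edir_vtx_succ in H |- *. coords. nra.
Qed.

Lemma prec_cross_neg i j : (i < n)%nat -> (j < n)%nat ->
  prec n v i j -> cross (edir n v i) (edir n v j) < 0.
Proof.
  intros Hi Hj [Hij [t [Ht Hl]]]. unfold on_line in Hl.
  apply Rnot_le_lt. intros Hcr.
  pose proof (vtx_half_plane j (S i) Hj) as Hs.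
  rewrite edir_vtx_succ in Hs.
  assert (Hon : cross (edir n v j) (psub (padd (vtx n v i) (edir n v i)) (vtx n v j)) = 0)
    by (coords; nra).
  rewrite <- edir_vtx_succ in Hon.
  destruct (Nat.eq_dec (S i mod n) j) as [E|E].
  - pose proof (edir_turn_cw i Hi) as Hturn.
    rewrite <- (edir_mod (S i)), E in Hturn. lra.
  - destruct (Nat.eq_dec (S i mod n) (S j mod n)) as [E'|E'].
    + pose proof (succ_mod i Hi). pose proof (succ_mod j Hj). lia.
    + pose proof (vtx_strict j (S i) Hj E E'). lra.
Qed.

Lemma cross_neg_prec i j : (j < n)%nat -> i <> j ->
  cross (edir n v i) (edir n v j) < 0 -> prec n v i j.
Proof.
  intros Hj Hij Hcr. split; [exact Hij|].
  pose proof (vtx_half_plane j (S i) Hj) as Hs.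
  rewrite edir_vtx_succ in Hs.
  set (c0 := cross (edir n v j) (psub (vtx n v i) (vtx n v j))) in *.
  set (c1 := cross (edir n v j) (edir n v i)).
  assert (Hc1 : 0 < c1) by (unfold c1; coords; lra).
  assert (Hsum : c0 + c1 <= 0) by (unfold c0, c1 in *; coords; lra).
  exists (- c0 / c1). split.
  - apply (Rmult_le_reg_r c1); [exact Hc1|]. field_simplify; lra.
  - unfold on_line. rewrite cross_psub_shift. fold c0 c1. field. lra.
Qed.

Lemma prev_index k : (k < n)%nat -> exists j, (j < n /\ S j mod n = k)%nat.
Proof.
  intros Hk. pose proof n_ge3. destruct k as [|k].
  - exists (n - 1)%nat. split; [lia|].
    replace (S (n - 1)) with n by lia. apply Nat.Div0.mod_same.
  - exists k. split; [lia | apply Nat.mod_small; lia].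
Qed.

Lemma on_line_closed_edge k X : (k < n)%nat -> in_P n v X -> on_line n v k X ->
  exists t, 0 <= t <= 1 /\ X = padd (vtx n v k) (pscale t (edir n v k)).
Proof.
  intros Hk HX Hl.
  pose proof (edir_turn_cw k Hk) as Hturn.
  destruct (cross_zero_scale (edir n v k) (psub X (vtx n v k))) as [t Ht].
  { exact Hl. }
  { exact (cross_neg_norm_pos _ _ Hturn). }
  assert (EX : X = padd (vtx n v k) (pscale t (edir n v k))).
  { rewrite <- Ht. pt_ring. }
  exists t. split; [|exact EX].
  destruct (prev_index k Hk) as [j [Hj Ej]].
  pose proof (HX j Hj) as Hprev. pose proof (HX (S k mod n) (mod_lt _)) as Hnext.
  pose proof (edir_turn_cw j Hj) as Hturn'.
  rewrite <- (edir_mod (S j)), Ej in Hturn'.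
  rewrite edir_mod, vtx_mod in Hnext.
  assert (Hvk : vtx n v k = padd (vtx n v j) (edir n v j))
    by (rewrite <- edir_vtx_succ, <- (vtx_mod (S j)), Ej; reflexivity).
  rewrite EX, cross_psub_shift in Hprev, Hnext.
  rewrite Hvk in Hprev. rewrite (edir_vtx_succ k) in Hnext.
  coords. split; nra.
Qed.

Lemma unit_of_on_line k X : (k < n)%nat -> in_P n v X -> on_line n v k X ->
  exists u, in_unit n v X u.
Proof.
  intros Hk HX Hl. destruct (on_line_closed_edge k X Hk HX Hl) as [t [Ht ->]].
  destruct (Req_dec t 0) as [->|T0]; [|destruct (Req_dec t 1) as [->|T1]].
  - exists (UVert k). split; [exact Hk | pt_ring].
  - exists (UVert (S k mod n)). split; [apply mod_lt|].
    rewrite vtx_mod, edir_vtx_succ. pt_ring.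
  - exists (UEdge k). split; [exact Hk|]. exists t. split; [lra | reflexivity].
Qed.

(* Minus the cross product below is the area of a clockwise parallelogram. *)
Definition locally_maximal4 (W0 W1 W2 W3 : pt) : Prop :=
  exists delta, 0 < delta /\ forall B0 B1 B2 B3, parallelogram4 B0 B1 B2 B3 ->
    in_P n v B0 -> in_P n v B1 -> in_P n v B2 -> in_P n v B3 ->
    Defs.dist W0 B0 < delta -> Defs.dist W1 B1 < delta ->
    Defs.dist W2 B2 < delta -> Defs.dist W3 B3 < delta ->
    cross (psub W1 W0) (psub W3 W0) <= cross (psub B1 B0) (psub B3 B0).

Definition local_max_parallelogram (W0 W1 W2 W3 : pt) : Prop :=
  parallelogram4 W0 W1 W2 W3 /\ locally_maximal4 W0 W1 W2 W3 /\
  in_P n v W0 /\ in_P n v W1 /\ in_P n v W2 /\ in_P n v W3.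

Lemma locally_maximal4_rot W0 W1 W2 W3 : padd W0 W2 = padd W1 W3 ->
  locally_maximal4 W0 W1 W2 W3 -> locally_maximal4 W1 W2 W3 W0.
Proof.
  intros Hs [d [Hd Hmax]]. exists d. split; [exact Hd|].
  intros B0 B1 B2 B3 HB P0 P1 P2 P3 D0 D1 D2 D3.
  pose proof (parallelogram4_rot _ _ _ _ (parallelogram4_rot _ _ _ _
    (parallelogram4_rot _ _ _ _ HB))) as HB'.
  rewrite (parallelogram_cross_rot _ _ _ _ Hs).
  rewrite (parallelogram_cross_rot _ _ _ _ (proj1 HB')).
  apply (Hmax B3 B0 B1 B2); assumption.
Qed.

Lemma local_max_parallelogram_rot W0 W1 W2 W3 :
  local_max_parallelogram W0 W1 W2 W3 -> local_max_parallelogram W1 W2 W3 W0.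
Proof.
  intros (Hp & Hm & HP).
  split; [exact (parallelogram4_rot _ _ _ _ Hp)|].
  split; [exact (locally_maximal4_rot _ _ _ _ (proj1 Hp) Hm) | tauto].
Qed.

Lemma fixed_corner_no_gain W0 W1 W2 W3 m1 m3 :
  local_max_parallelogram W0 W1 W2 W3 ->
  near0 (fun s =>
    in_P n v (padd W1 (pscale s m1)) -> in_P n v (padd W2 (pscale s (padd m1 m3))) ->
    in_P n v (padd W3 (pscale s m3)) ->
    cross (psub W1 W0) (psub W3 W0) <=
    cross (psub (padd W1 (pscale s m1)) W0) (psub (padd W3 (pscale s m3)) W0)).
Proof.
  intros ([Hs Hcw] & [d [Hd Hmax]] & H0 & _).
  destruct (near0_and _ _ (near0_dist W1 m1 d Hd)
             (near0_and _ _ (near0_dist W2 (padd m1 m3) d Hd) (near0_dist W3 m3 d Hd)))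
    as [h [Hh Hnear]].
  exists h. split; [exact Hh|]. intros s Hsh H1 H2 H3.
  destruct (Hnear s Hsh) as (D1 & D2 & D3).
  destruct (Rle_or_lt (cross (psub W1 W0) (psub W3 W0))
             (cross (psub (padd W1 (pscale s m1)) W0) (psub (padd W3 (pscale s m3)) W0)))
    as [Hle|Hlt]; [exact Hle|].
  apply (Hmax W0 _ (padd W2 (pscale s (padd m1 m3))) _); auto.
  - split; [|lra]. rewrite (parallelogram_fourth _ _ _ _ Hs). pt_ring.
  - rewrite dist_self. exact Hd.
Qed.

Lemma open_edge_slide i X k : in_open_edge n v i X ->
  near0 (fun s => in_P n v (padd X (pscale s (pscale k (edir n v i))))).
Proof.
  intros [t [Ht ->]].
  assert (Hu : near0 (fun u => in_P n v (padd (padd (vtx n v i) (pscale t (edir n v i)))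
                                               (pscale u (edir n v i))))).
  { exists (Rmin t (1 - t)). split; [apply Rmin_pos; lra|].
    intros u Hu. apply Rabs_le_between in Hu.
    pose proof (Rmin_l t (1 - t)). pose proof (Rmin_r t (1 - t)).
    replace (padd (padd (vtx n v i) (pscale t (edir n v i))) (pscale u (edir n v i)))
      with (padd (vtx n v i) (pscale (t + u) (edir n v i))) by pt_ring.
    apply edge_point_in_P. lra. }
  destruct (near0_scale _ k Hu) as [h [Hh Hs]].
  exists h. split; [exact Hh|]. intros s Hsh.
  replace (pscale s (pscale k (edir n v i))) with (pscale (s * k) (edir n v i)) by pt_ring.
  exact (Hs s Hsh).
Qed.

Lemma interior_slide Y w :
  (forall k, (k < n)%nat -> cross (edir n v k) (psub Y (vtx n v k)) < 0) ->
  near0 (fun s => in_P n v (padd Y (pscale s w))).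
Proof.
  intros Hint. unfold in_P. apply near0_forall_lt. intros k Hk.
  destruct (near0_scale _ (cross (edir n v k) w) (near0_add_nonpos _ (Hint k Hk)))
    as [h [Hh Hs]].
  exists h. split; [exact Hh|]. intros s Hsh.
  rewrite cross_psub_shift. exact (Hs s Hsh).
Qed.

Lemma local_max_corner_on_line W0 W1 W2 W3 :
  local_max_parallelogram W0 W1 W2 W3 -> exists k, (k < n)%nat /\ on_line n v k W1.
Proof.
  intros Hlm. pose proof Hlm as ([Hs Hcw] & _ & P0 & P1 & P2 & P3).
  apply NNPP. intros Hno.
  assert (Hint : forall k, (k < n)%nat -> cross (edir n v k) (psub W1 (vtx n v k)) < 0).
  { intros k Hk. destruct (Rle_lt_or_eq_dec _ _ (P1 k Hk)) as [Hlt|Heq]; [exact Hlt|].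
    exfalso. apply Hno. exists k. split; [exact Hk | exact Heq]. }
  (* Wp lies beyond W1 on the ray from W0: translating the side W1W2 by s (Wp - W2) keeps
     W2 in P by convexity and scales the area by 1 + s e. *)
  destruct (interior_slide W1 (psub W1 W0) Hint) as [e [He Hout]].
  set (Wp := padd W1 (pscale e (psub W1 W0))).
  assert (HWp : in_P n v Wp) by (apply Hout; rewrite Rabs_pos_eq; lra).
  set (m := psub Wp W2).
  destruct (near0_and _ _ (interior_slide W1 m Hint)
             (fixed_corner_no_gain W0 W1 W2 W3 m (0, 0) Hlm)) as [h [Hh Hnear]].
  set (s := Rmin h 1).
  assert (Hs0 : 0 < s) by (apply Rmin_pos; lra).
  assert (Hs1 : s <= 1) by apply Rmin_r.
  assert (Hsh : Rabs s <= h) by (rewrite Rabs_pos_eq by lra; apply Rmin_l).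
  destruct (Hnear s Hsh) as [Q1 Hgain].
  assert (Q2 : in_P n v (padd W2 (pscale s (padd m (0, 0))))).
  { replace (padd W2 (pscale s (padd m (0, 0)))) with (padd W2 (pscale s (psub Wp W2)))
      by (unfold m; pt_ring).
    apply in_P_segment; [exact P2 | exact HWp | lra]. }
  assert (Q3 : in_P n v (padd W3 (pscale s (0, 0)))).
  { replace (padd W3 (pscale s (0, 0))) with W3 by pt_ring. exact P3. }
  specialize (Hgain Q1 Q2 Q3).
  assert (E : cross (psub (padd W1 (pscale s m)) W0) (psub (padd W3 (pscale s (0, 0))) W0) =
              (1 + s * e) * cross (psub W1 W0) (psub W3 W0)).
  { unfold m, Wp. rewrite (parallelogram_fourth _ _ _ _ Hs). coords. ring. }
  assert (Hse : 0 < s * e) by (apply Rmult_lt_0_compat; lra).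
  rewrite E in Hgain. nra.
Qed.

Lemma three_corner_slide W0 W1 W2 W3 a b c :
  local_max_parallelogram W0 W1 W2 W3 ->
  in_open_edge n v a W1 -> in_open_edge n v b W2 -> in_open_edge n v c W3 ->
  cross (edir n v a) (edir n v b) < 0 -> cross (edir n v b) (edir n v c) < 0 ->
  cross (edir n v a) (edir n v c) < 0 -> False.
Proof.
  intros Hlm H1 H2 H3 Hab Hbc Hac.
  set (ea := edir n v a) in *. set (eb := edir n v b) in *. set (ec := edir n v c) in *.
  (* Velocities along the three edges keeping W0 fixed, from
     cross(b,c) a + cross(a,b) c = cross(a,c) b. *)
  set (m1 := pscale (cross eb ec) ea). set (m3 := pscale (cross ea eb) ec).
  assert (Hm2 : pscale (cross ea ec) eb = padd m1 m3) by (unfold m1, m3; pt_ring).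
  destruct (near0_and _ _ (open_edge_slide a W1 (cross eb ec) H1)
             (near0_and _ _ (open_edge_slide b W2 (cross ea ec) H2)
               (near0_and _ _ (open_edge_slide c W3 (cross ea eb) H3)
                 (fixed_corner_no_gain W0 W1 W2 W3 m1 m3 Hlm)))) as [h [Hh Hnear]].
  set (L := cross m1 (psub W3 W0) + cross (psub W1 W0) m3).
  set (s := if Rle_dec 0 L then - h else h).
  assert (Hsh : Rabs s = h)
    by (unfold s; destruct (Rle_dec 0 L); rewrite ?Rabs_Ropp; apply Rabs_pos_eq; lra).
  assert (HsL : s * L <= 0) by (unfold s; destruct (Rle_dec 0 L); nra).
  assert (Hs2 : 0 < s * s) by (unfold s; destruct (Rle_dec 0 L); nra).
  destruct (Hnear s (Req_le _ _ Hsh)) as (Q1 & Q2 & Q3 & Hgain).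
  fold eb in Q2. rewrite Hm2 in Q2.
  specialize (Hgain Q1 Q2 Q3).
  assert (E : cross (psub (padd W1 (pscale s m1)) W0) (psub (padd W3 (pscale s m3)) W0) =
              cross (psub W1 W0) (psub W3 W0) + s * L +
              s * s * (cross eb ec * cross ea eb * cross ea ec)).
  { unfold L, m1, m3. coords. ring. }
  assert (HK : cross eb ec * cross ea eb * cross ea ec < 0).
  { assert (0 < cross eb ec * cross ea eb) by nra. nra. }
  rewrite E in Hgain. nra.
Qed.

Lemma open_edge_cross_lt a b X Y : a <> b ->
  in_unit n v X (UEdge a) -> in_unit n v Y (UEdge b) -> cross (edir n v a) (psub Y X) < 0.
Proof.
  intros Hab [Ha [t [_ ->]]] [Hb HY]. rewrite cross_psub_along.
  exact (open_edge_strict b a Y Hb Ha Hab HY).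
Qed.

Lemma open_edge_cross_le a X W :
  in_unit n v X (UEdge a) -> in_P n v W -> cross (edir n v a) (psub W X) <= 0.
Proof. intros [Ha [t [_ ->]]] HW. rewrite cross_psub_along. exact (HW a Ha). Qed.

Lemma parallelogram_edges_turn_cw W X Y Z a b :
  parallelogram4 W X Y Z -> in_P n v W -> in_P n v Z -> a <> b ->
  in_unit n v X (UEdge a) -> in_unit n v Y (UEdge b) -> cross (edir n v a) (edir n v b) < 0.
Proof.
  intros [Hs Hcw] HW HZ Hab HX HY.
  pose proof (open_edge_cross_lt a b X Y Hab HX HY) as Ha.
  pose proof (open_edge_cross_lt b a Y X (not_eq_sym Hab) HY HX) as Hb.
  pose proof (open_edge_cross_le a X W HX HW) as HaW.
  pose proof (open_edge_cross_le b Y Z HY HZ) as HbZ.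
  pose proof (no_parallel a b (proj1 HX) (proj1 HY) Hab) as Hnp.
  set (ea := edir n v a) in *. set (eb := edir n v b) in *.
  assert (Hside : psub Z Y = psub W X) by (rewrite (parallelogram_fourth _ _ _ _ Hs); pt_ring).
  rewrite Hside in HbZ.
  assert (Hturn : cross (psub Y X) (psub W X) < 0).
  { rewrite (parallelogram_fourth _ _ _ _ Hs). revert Hcw. coords. intros. nra. }
  assert (Hid : cross ea eb * cross (psub Y X) (psub W X) =
                cross ea (psub Y X) * cross eb (psub W X) - cross ea (psub W X) * cross eb (psub Y X))
    by (coords; ring).
  assert (Hb' : cross eb (psub Y X) > 0) by (revert Hb; coords; intros; nra).
  assert (Hle : cross ea eb * cross (psub Y X) (psub W X) >= 0) by (rewrite Hid; nra).
  destruct (Rtotal_order (cross ea eb) 0) as [Hlt|[Heq|Hgt]]; [exact Hlt | contradiction | nra].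
Qed.

Lemma three_open_edge_corners W0 W1 W2 W3 a b c :
  local_max_parallelogram W0 W1 W2 W3 -> a <> b -> b <> c ->
  in_unit n v W1 (UEdge a) -> in_unit n v W2 (UEdge b) -> in_unit n v W3 (UEdge c) ->
  cross (edir n v a) (edir n v c) < 0 -> False.
Proof.
  intros Hlm Hab Hbc H1 H2 H3 Hac.
  pose proof Hlm as (Hp & _ & P0 & P1 & _ & P3).
  apply (three_corner_slide W0 W1 W2 W3 a b c Hlm (proj2 H1) (proj2 H2) (proj2 H3)); [| |exact Hac].
  - exact (parallelogram_edges_turn_cw W0 W1 W2 W3 a b Hp P0 P3 Hab H1 H2).
  - exact (parallelogram_edges_turn_cw W1 W2 W3 W0 b c (parallelogram4_rot _ _ _ _ Hp) P1 P0 Hbc H2 H3).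
Qed.

Definition no_common_edge (X Y : pt) : Prop :=
  forall i, in_unit n v X (UEdge i) -> ~ in_unit n v Y (UEdge i).

Lemma no_common_edge_neq X Y i j :
  no_common_edge X Y -> in_unit n v X (UEdge i) -> in_unit n v Y (UEdge j) -> i <> j.
Proof. intros H HX HY ->. exact (H j HX HY). Qed.

Lemma vertex_anchored X i : in_unit n v X (UVert i) -> anchored n v X.
Proof. intros [Hi E]. exists i. split; assumption. Qed.

Lemma chasing_edges a b : (b < n)%nat -> a <> b ->
  cross (edir n v a) (edir n v b) < 0 -> chasing n v (UEdge a) (UEdge b).
Proof. intros Hb Hab H. split; apply cross_neg_prec; assumption. Qed.

Lemma narrow_corner_alternatives X0 Y X1 Z uX0 uY uX1 uZ :
  local_max_parallelogram X0 Y X1 Z ->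
  in_unit n v X0 uX0 -> in_unit n v Y uY -> in_unit n v X1 uX1 -> in_unit n v Z uZ ->
  no_common_edge X0 Y -> no_common_edge Y X1 -> no_common_edge X1 Z ->
  no_common_edge Z X0 -> no_common_edge Y Z ->
  chasing n v uX0 uX1 ->
  anchored n v Y \/ (anchored n v Z /\ (anchored n v X0 \/ anchored n v X1)) \/
  (anchored n v X0 /\ chasing n v uZ uY) \/ (anchored n v X1 /\ chasing n v uY uZ).
Proof.
  intros Hlm U0 UY U1 UZ N0Y NY1 N1Z NZ0 NYZ Hch.
  pose proof (local_max_parallelogram_rot _ _ _ _ Hlm) as Hlm1.
  pose proof (local_max_parallelogram_rot _ _ _ _ Hlm1) as Hlm2.
  pose proof (local_max_parallelogram_rot _ _ _ _ Hlm2) as Hlm3.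
  destruct uY as [d|y]; [|left; exact (vertex_anchored _ _ UY)].
  destruct uZ as [r|z].
  - pose proof (no_common_edge_neq _ _ _ _ NYZ UY UZ) as Hdr.
    destruct (Rtotal_order (cross (edir n v d) (edir n v r)) 0) as [Hlt|[Heq|Hgt]].
    + destruct uX1 as [q|x1].
      * exfalso. apply (three_open_edge_corners X0 Y X1 Z d q r Hlm); eauto using no_common_edge_neq.
      * right; right; right. split; [exact (vertex_anchored _ _ U1)|].
        exact (chasing_edges d r (proj1 UZ) Hdr Hlt).
    + exact (False_ind _ (no_parallel d r (proj1 UY) (proj1 UZ) Hdr Heq)).
    + rewrite cross_antisym in Hgt.
      destruct uX0 as [p|x0].
      * exfalso. apply (three_open_edge_corners X1 Z X0 Y r p d Hlm2);
          eauto using no_common_edge_neq; lra.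
      * right; right; left. split; [exact (vertex_anchored _ _ U0)|].
        apply (chasing_edges r d (proj1 UY) (not_eq_sym Hdr)). lra.
  - destruct uX0 as [p|x0]; [destruct uX1 as [q|x1]|].
    + exfalso. destruct Hch as [Hpq _].
      apply (three_open_edge_corners Z X0 Y X1 p d q Hlm3); eauto using no_common_edge_neq.
      exact (prec_cross_neg p q (proj1 U0) (proj1 U1) Hpq).
    + right; left. split; [exact (vertex_anchored _ _ UZ) | right; exact (vertex_anchored _ _ U1)].
    + right; left. split; [exact (vertex_anchored _ _ UZ) | left; exact (vertex_anchored _ _ U0)].
Qed.

Section Corners.

Variable A : nat -> pt.
Hypothesis LMAP_A : LMAP n v A.

Lemma LMAP_local_max : local_max_parallelogram (A 0%nat) (A 1%nat) (A 2%nat) (A 3%nat).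
Proof.
  destruct LMAP_A as (Hp & Hlies & [d [Hd Hmax]] & _).
  split; [exact Hp|]. split.
  - exists d. split; [exact Hd|]. intros B0 B1 B2 B3 HB P0 P1 P2 P3 D0 D1 D2 D3.
    set (B := fun k => match k with 0 => B0 | 1 => B1 | 2 => B2 | _ => B3 end%nat).
    assert (Hle : area B <= area A).
    { apply Hmax; [exact HB| |]; intros k Hk; destruct k as [|[|[|[|k]]]]; simpl; auto; lia. }
    unfold area in Hle. simpl in Hle.
    rewrite (Rabs_left _ (proj2 HB)), (Rabs_left _ (proj2 Hp)) in Hle. lra.
  - repeat split; apply Hlies; lia.
Qed.

Lemma LMAP_corner_quadruple m : local_max_parallelogram
  (corner A (m + 3)) (corner A m) (corner A (m + 1)) (corner A (m + 2)).
Proof.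
  induction m as [|m IH].
  - exact (local_max_parallelogram_rot _ _ _ _ (local_max_parallelogram_rot _ _ _ _
      (local_max_parallelogram_rot _ _ _ _ LMAP_local_max))).
  - apply local_max_parallelogram_rot in IH.
    rewrite (corner_shift A (S m + 3) m), (corner_shift A (S m) (m + 1)),
      (corner_shift A (S m + 1) (m + 2)), (corner_shift A (S m + 2) (m + 3)) by lia.
    exact IH.
Qed.

Lemma LMAP_corner_unit m : exists u, in_unit n v (corner A m) u.
Proof.
  pose proof (LMAP_corner_quadruple m) as Hlm.
  destruct (local_max_corner_on_line _ _ _ _ Hlm) as [k [Hk Hl]].
  destruct Hlm as (_ & _ & _ & HP & _).
  exact (unit_of_on_line k _ Hk HP Hl).
Qed.

Lemma LMAP_no_common_edge i j : (i < j < i + 4 \/ j < i < j + 4)%nat ->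
  no_common_edge (corner A i) (corner A j).
Proof.
  intros Hij k [Hk Hi] [_ Hj]. destruct LMAP_A as (_ & _ & _ & Hns).
  apply Hns. exists (i mod 4)%nat, (j mod 4)%nat, k.
  repeat split; try apply Nat.mod_upper_bound; try lia; auto.
  exact (mod4_neq i j Hij).
Qed.

Lemma not_even_narrow k : ~ even n v A k -> narrow n v A k \/ narrow n v A (k + 2).
Proof.
  intros Hne.
  destruct (LMAP_corner_unit (k + 3)) as [u U]. destruct (LMAP_corner_unit (k + 1)) as [u' U'].
  destruct (classic (chasing n v u u')) as [C|C]; [left; exists u, u'; auto|].
  destruct (classic (chasing n v u' u)) as [C'|C'].
  - right. unfold narrow.
    rewrite (corner_shift A (k + 2 + 3) (k + 1)), (corner_shift A (k + 2 + 1) (k + 3)) by lia.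
    exists u', u. auto.
  - exfalso. apply Hne. exists u, u'. auto.
Qed.

Lemma LMAP_narrow_alternatives m : narrow n v A m ->
  (exists k, (k < 4)%nat /\ anchored n v (A k) /\ narrow n v A k) \/
  (exists k, (k < 4)%nat /\ anchored n v (A k) /\ broad n v A k /\
     (anchored n v (corner A (k + 3)) \/ anchored n v (corner A (k + 1)))).
Proof.
  intros (u0 & u1 & U0 & U1 & Hch).
  destruct (LMAP_corner_unit m) as [uY UY]. destruct (LMAP_corner_unit (m + 2)) as [uZ UZ].
  assert (Hmod : forall j, (j mod 4 < 4)%nat) by (intros; apply Nat.mod_upper_bound; lia).
  destruct (narrow_corner_alternatives _ _ _ _ u0 uY u1 uZ (LMAP_corner_quadruple m) U0 UY U1 UZ
    (LMAP_no_common_edge (m + 3) m ltac:(lia)) (LMAP_no_common_edge m (m + 1) ltac:(lia))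
    (LMAP_no_common_edge (m + 1) (m + 2) ltac:(lia)) (LMAP_no_common_edge (m + 2) (m + 3) ltac:(lia))
    (LMAP_no_common_edge m (m + 2) ltac:(lia)) Hch)
    as [HY | [[HZ HX] | [[HX0 HZY] | [HX1 HYZ]]]].
  - left. exists (m mod 4)%nat. split; [apply Hmod|]. split; [exact HY|].
    unfold narrow. rewrite !corner_mod4. exists u0, u1. auto.
  - right. exists ((m + 2) mod 4)%nat. split; [apply Hmod|]. split; [exact HZ|].
    unfold broad. rewrite !corner_mod4.
    rewrite (corner_shift A (m + 2 + 3) (m + 1)), (corner_shift A (m + 2 + 1) (m + 3)) by lia.
    split; [exists u1, u0; auto | tauto].
  - left. exists ((m + 3) mod 4)%nat. split; [apply Hmod|]. split; [exact HX0|].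
    unfold narrow. rewrite !corner_mod4.
    rewrite (corner_shift A (m + 3 + 3) (m + 2)), (corner_shift A (m + 3 + 1) m) by lia.
    exists uZ, uY. auto.
  - left. exists ((m + 1) mod 4)%nat. split; [apply Hmod|]. split; [exact HX1|].
    unfold narrow. rewrite !corner_mod4.
    rewrite (corner_shift A (m + 1 + 3) m), (corner_shift A (m + 1 + 1) (m + 2)) by lia.
    exists uY, uZ. auto.
Qed.

End Corners.

End Polygon.

Theorem lemma13 (n : nat) (v : nat -> pt) (A : nat -> pt) :
  convex_polygon_cw n v ->
  no_parallel_edges n v ->
  LMAP n v A ->
  (exists k, (k < 4)%nat /\ anchored n v (A k) /\ narrow n v A k) \/
  (exists k, (k < 4)%nat /\ anchored n v (A k) /\ broad n v A k /\
     (anchored n v (corner A (k + 3)) \/ anchored n v (corner A (k + 1)))) \/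
  (forall k, (k < 4)%nat -> even n v A k).
Proof.
  intros Hconv Hnp HA.
  destruct (classic (forall k, (k < 4)%nat -> even n v A k)) as [Hall|Hnot];
    [right; right; exact Hall|].
  assert (Hnarrow : exists m, narrow n v A m).
  { apply not_all_ex_not in Hnot. destruct Hnot as [k Hk].
    apply imply_to_and in Hk. destruct Hk as [_ Hne].
    destruct (not_even_narrow n v Hconv A HA k Hne) as [Hm|Hm]; eexists; exact Hm. }
  destruct Hnarrow as [m Hm].
  destruct (LMAP_narrow_alternatives n v Hconv Hnp A HA m Hm) as [H|H]; [left | right; left]; exact H.
Qed.
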